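(* Let $t \ge 2$ and $d \ge 2$ be integers. Let $n \ge 2d$ be an integer for which there is an integer $r$ with $n^t \equiv r^t \pmod d$ and $0 \le r^t < d$. Then $\left\lfloor n^t/d \right\rfloor$ is composite. *)

From mathcomp Require Import all_boot all_algebra.
Set Implicit Arguments. Unset Strict Implicit. Unset Printing Implicit Defensive.

Definition composite (m : nat) : bool := (1 < m)%N && ~~ prime m.

From mathcomp Require Import all_boot all_algebra.
From mathcomp Require Import zify.
Import GRing.Theory Num.Theory.

(* Write a = |r|.  Since 0 <= a^t < d, the remainder of n^t modulo d is a^t, so
   d * floor(n^t/d) = n^t - a^t = (n - a) * S with S = n^(t-1) + ... + a^(t-1).
   Splitting d = d1 * d2 with d1 | n - a and d2 | S exhibits floor(n^t/d) as
   the product of (n - a)/d1 >= 2 (as n - a > d) and S/d2 >= 2 (as S >= n >= 2d). *)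

Lemma composite_mul (m k : nat) : 2 <= m -> 2 <= k -> composite (m * k).
Proof.
move=> m_ge2 k_ge2; apply/andP; split; first nia.
apply/negP => /primeP[_ /(_ m (dvdn_mulr k (dvdnn m)))] /orP[] /eqP; nia.
Qed.

Lemma dvdn_mul_split (d x y : nat) : 0 < d -> d %| x * y ->
  exists d1 d2, [/\ d = d1 * d2, d1 %| x & d2 %| y].
Proof.
move=> d_gt0 dv_d_xy; set g := gcdn x d.
have g_gt0 : 0 < g by rewrite gcdn_gt0 d_gt0 orbT.
have [x1 def_x] := dvdnP (dvdn_gcdl x d).
have [d2 def_d] := dvdnP (dvdn_gcdr x d).
have co_d2_x1 : coprime d2 x1.
  by rewrite /coprime gcdnC -(eqn_pmul2r g_gt0) mul1n muln_gcdl -def_x -def_d.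
exists g, d2; split; [by rewrite mulnC | exact: dvdn_gcdl |].
by rewrite -(Gauss_dvdr y co_d2_x1) -(dvdn_pmul2r g_gt0) mulnAC -def_x -def_d.
Qed.

Lemma composite_mul_divn (d x y : nat) :
  0 < d -> d %| x * y -> d < x -> 2 * d <= y -> composite (x * y %/ d).
Proof.
move=> d_gt0 dv_d_xy lt_d_x le_2d_y.
have [d1 [d2 [def_d /dvdnP[x1 def_x] /dvdnP[y1 def_y]]]] :=
  dvdn_mul_split d x y d_gt0 dv_d_xy.
have /andP[d1_gt0 d2_gt0] : (0 < d1) && (0 < d2) by rewrite -muln_gt0 -def_d.
have -> : x * y %/ d = x1 * y1.
  by rewrite def_d def_x def_y mulnACA mulnK // muln_gt0 d1_gt0.
by apply: composite_mul; nia.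
Qed.

Lemma leq_exp_pred_sum (k m n : nat) :
  0 < k -> m ^ k.-1 <= \sum_(i < k) m ^ (k.-1 - i) * n ^ i.
Proof. by case: k => // k _; rewrite big_ord_recl subn0 expn0 muln1 leq_addr. Qed.

Lemma ltn_exp_base (t a d : nat) : 0 < t -> a ^ t < d -> a < d.
Proof.
move=> t_gt0 lt_at_d; have d_gt0 : 0 < d by lia.
rewrite -(ltn_exp2r _ _ t_gt0); apply: leq_trans lt_at_d _.
by rewrite -{1}(expn1 d); apply: leq_pexp2l.
Qed.

Local Open Scope ring_scope.

Lemma modn_of_modz (m d : nat) (z : int) :
  (m%:Z = z %[mod d%:Z])%Z -> 0 <= z -> z < d%:Z -> (m %% d)%N = `|z|%N.
Proof.
move=> + z_ge0; rewrite -(gez0_abs z_ge0) !modz_nat ltz_nat => -[->].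
exact: modn_small.
Qed.

Theorem lemma1 (t d n : nat) (r : int)
  (ht : (2 <= t)%N) (hd : (2 <= d)%N) (hn : (2 * d <= n)%N)
  (hcong : ((n%:Z) ^+ t = r ^+ t %[mod d%:Z])%Z)
  (hr0 : 0 <= r ^+ t) (hr1 : r ^+ t < d%:Z) :
  composite (n ^ t %/ d)%N.
Proof.
set a := `|r|%N.
have mod_nt : (n ^ t %% d = a ^ t)%N.
  by rewrite -abszX; apply: modn_of_modz => //; rewrite -natz natrX natz.
have lt_a_d : (a < d)%N.
  by apply: (ltn_exp_base t a d (ltnW ht)); rewrite -mod_nt ltn_mod; lia.
have def_nt : (n ^ t - a ^ t = n ^ t %/ d * d)%N.
  by rewrite -mod_nt {1}(divn_eq (n ^ t) d) addnK.
have -> : (n ^ t %/ d = (n ^ t - a ^ t) %/ d)%N by rewrite def_nt mulnK //; lia.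
rewrite subn_exp; apply: composite_mul_divn.
- lia.
- by rewrite -subn_exp def_nt dvdn_mull.
- lia.
- apply: (leq_trans hn); apply: leq_trans _ (leq_exp_pred_sum t n a (ltnW ht)).
  by rewrite -{1}(expn1 n); apply: leq_pexp2l; lia.
Qed.
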